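(* If the graph $G=([k],E)$ is realisable in $\mathbb{R}^d$ with profile $\boldsymbol\lambda$ and $\lambda_i\ge 2$ for every $i\in[k]$, then $\zeta(G,\boldsymbol\lambda)\le\frac58 d+\frac18 k$.
   Context: A sphere of dimension $\ell$ in $\mathbb{R}^d$ ($0\le\ell\le d-1$) is the set of points of an $(\ell+1)$-dimensional affine subspace at a fixed positive distance from a fixed point of that subspace. For finite sets $P_1,\dots,P_k\subset\mathbb{R}^d$, the profile of $(P_1,\dots,P_k)$ is $\boldsymbol\lambda=(\lambda_1,\dots,\lambda_k)$, where $\lambda_i=0$ if $|P_i|\le 3$, and otherwise $\lambda_i$ is the smallest $\ell$ such that some sphere of dimension $\ell$ contains $P_i$, with $\lambda_i=d$ if no sphere contains $P_i$. A graph $G=([k],E)$ is compatible with $(P_1,\dots,P_k)$ if $\|p-p'\|=1$ for every edge $\{i,j\}\in E$ and all $p\in P_i$, $p'\in P_j$. $G$ is realisable in $\mathbb{R}^d$ with profile $\boldsymbol\lambda$ if there exist finite sets $P_1,\dots,P_k\subset\mathbb{R}^d$ with profile $\boldsymbol\lambda$ that are compatible with $G$. For $i\in[k]$ let $V_i=\{j\in[k]\setminus\{i\}:\{i,j\}\notin E\}$. $\zeta(G,\boldsymbol\lambda)$ denotes the optimum value of the linear program: minimize $\sum_{i\in[k]}\lambda_ix_i$ over $\mathbf{x}\in\mathbb{R}^k$ subject to $x_i\ge 0$ and $\lambda_ix_i+\sum_{j\in V_i}x_j\ge 1$ for all $i\in[k]$. *)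

From HB Require Import structures.
From mathcomp Require Import all_boot all_order all_algebra.
From mathcomp Require Import finmap.
From mathcomp Require Import classical_sets reals.
Set Implicit Arguments. Unset Strict Implicit. Unset Printing Implicit Defensive.
Import Order.TTheory GRing.Theory Num.Theory.
Local Open Scope ring_scope.


Section Defs.
Variable R : realType.

Definition eucl_norm (d : nat) (v : 'rV[R]_d) : R :=
  Num.sqrt (\sum_(i < d) v 0 i ^+ 2).

(* A sphere of dimension l: centre c, (l+1)-dimensional direction space = row space
   of V (rank l+1), radius r > 0.  The sphere is {c + v | v in rowspace V, |v| = r}.
   [in_sphere_dim l A] : some sphere of dimension l contains A. *)
Definition in_sphere_dim (d l : nat) (A : {fset 'rV[R]_d}) : Prop :=
  exists (c : 'rV[R]_d) (V : 'M[R]_(l.+1, d)) (r : R),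
    [/\ \rank V = l.+1, 0 < r &
        forall p, p \in A -> ((p - c) <= V)%MS /\ eucl_norm (p - c) = r].

(* lambda is the profile value of A: 0 if |A| <= 3, else the least l (0 <= l <= d-1)
   such that some sphere of dimension l contains A, and d if there is none. *)
Definition profile_value (d : nat) (A : {fset 'rV[R]_d}) (lam : nat) : Prop :=
  if (#|` A|%fset <= 3)%N then lam = 0%N
  else [/\ (lam <= d)%N,
           (lam < d)%N -> in_sphere_dim lam A &
           forall l, (l < lam)%N -> ~ in_sphere_dim l A].

Definition has_profile (d k : nat) (P : 'I_k -> {fset 'rV[R]_d}) (lam : 'I_k -> nat) :=
  forall i, profile_value (P i) (lam i).

Definition compatible (d k : nat) (E : rel 'I_k) (P : 'I_k -> {fset 'rV[R]_d}) :=
  forall i j, E i j -> forall p p', p \in P i -> p' \in P j -> eucl_norm (p - p') = 1.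

Definition realisable (d k : nat) (E : rel 'I_k) (lam : 'I_k -> nat) :=
  exists P : 'I_k -> {fset 'rV[R]_d}, has_profile P lam /\ compatible E P.

Definition nonnbrs (k : nat) (E : rel 'I_k) (i : 'I_k) : {set 'I_k} :=
  [set j | (j != i) && ~~ E i j].

Definition lp_feasible (k : nat) (E : rel 'I_k) (lam : 'I_k -> nat) (x : 'I_k -> R) :=
  forall i, 0 <= x i /\ 1 <= (lam i)%:R * x i + \sum_(j in nonnbrs E i) x j.

Definition lp_objective (k : nat) (lam : 'I_k -> nat) (x : 'I_k -> R) : R :=
  \sum_(i < k) (lam i)%:R * x i.

Definition zeta (k : nat) (E : rel 'I_k) (lam : 'I_k -> nat) : R :=
  inf [set lp_objective lam x | x in lp_feasible E lam].
End Defs.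

(* By LP duality, proved here through Fourier-Motzkin elimination, it suffices
   to show [8 * \sum_i y_i <= 5 d + k] for every dual feasible [y], i.e. [y >= 0]
   with [lam_j y_j + \sum_(i in V_j) y_i <= lam_j].  Geometry enters only through
   cliques: for adjacent [i] and [j] all differences of points of [P_i] are
   orthogonal to those of [P_j], and [P_i] lies on a unit sphere around a point
   of [P_j], so these differences span a space of dimension at least
   [lam_i + 1]; hence [\sum_(i in C) (lam_i + 1) <= d] for every clique [C] with
   two or more vertices.  The dual bound then follows by induction: pick [c]
   with [y_c] maximal; the constraint at [c] bounds the contribution of [c] and
   its non-neighbours, and the neighbours of [c] form a graph whose cliques
   have weight at most [d - (lam_c + 1)]. *)

From mathcomp Require Import boolp classical_sets reals.
From mathcomp Require Import all_boot all_order all_algebra.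
From mathcomp Require Import finmap.
From mathcomp Require Import ring lra.
Set Implicit Arguments. Unset Strict Implicit. Unset Printing Implicit Defensive.
Import Order.TTheory GRing.Theory Num.Theory.
Local Open Scope ring_scope.

Section Farkas.
Variable R : realFieldType.

(* A row [(a, b)] encodes the linear inequality [\sum_(j < n) a j * x j >= b];
   coefficients are indexed by [nat] so that eliminating the last variable
   does not change the type of rows. *)
Definition row_holds (n : nat) (r : (nat -> R) * R) (x : nat -> R) :=
  r.2 <= \sum_(j < n) r.1 j * x j.

Inductive cone (I : Type) (rw : I -> (nat -> R) * R) : (nat -> R) * R -> Prop :=
| cone_gen i : cone rw (rw i)
| cone_add r1 r2 : cone rw r1 -> cone rw r2 ->
    cone rw (fun j => r1.1 j + r2.1 j, r1.2 + r2.2)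
| cone_scale (c : R) r : 0 <= c -> cone rw r -> cone rw (fun j => c * r.1 j, c * r.2)
| cone_ext r r' : r.1 =1 r'.1 -> r.2 = r'.2 -> cone rw r -> cone rw r'.

Lemma cone0 (I : Type) (rw : I -> (nat -> R) * R) (i : I) : cone rw (fun _ => 0, 0).
Proof.
by apply: cone_ext (cone_scale (lexx 0) (cone_gen rw i)) => [j|] /=; rewrite mul0r.
Qed.

Lemma cone_trans (I J : Type) (rw : I -> (nat -> R) * R) (rw' : J -> (nat -> R) * R) :
  (forall j, cone rw (rw' j)) -> forall r, cone rw' r -> cone rw r.
Proof.
move=> rw'_cone r; elim=> {r} //.
- by move=> r1 r2 _ H1 _ H2; apply: cone_add.
- by move=> c r c0 _ H; apply: cone_scale.
- by move=> r r' H1 H2 _ H; apply: cone_ext H.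
Qed.

Lemma cone_coef (I : finType) (rw : I -> (nat -> R) * R) r : cone rw r ->
  exists mu : I -> R, [/\ forall i, 0 <= mu i,
    forall j, r.1 j = \sum_i mu i * (rw i).1 j & r.2 = \sum_i mu i * (rw i).2].
Proof.
elim=> {r} [i|r1 r2 _ [m1 [m1_ge0 E1 E2]] _ [m2 [m2_ge0 F1 F2]]
           |c r c0 _ [m [m_ge0 E1 E2]]|r r' e1 e2 _ [m [m_ge0 E1 E2]]].
- exists (fun i' => (i' == i)%:R); split=> [i'|j|]; rewrite ?ler0n //.
  + by rewrite (bigD1 i) //= eqxx mul1r big1 ?addr0 // => i' /negbTE ->; rewrite mul0r.
  + by rewrite (bigD1 i) //= eqxx mul1r big1 ?addr0 // => i' /negbTE ->; rewrite mul0r.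
- exists (fun i => m1 i + m2 i); split=> [i|j|] /=; first by rewrite addr_ge0.
  + by rewrite E1 F1 -big_split; apply: eq_bigr => i _; rewrite mulrDl.
  + by rewrite E2 F2 -big_split; apply: eq_bigr => i _; rewrite mulrDl.
- exists (fun i => c * m i); split=> [i|j|] /=; first by rewrite mulr_ge0.
  + by rewrite E1 mulr_sumr; apply: eq_bigr => i _; rewrite mulrA.
  + by rewrite E2 mulr_sumr; apply: eq_bigr => i _; rewrite mulrA.
- by exists m; split=> // [j|]; rewrite -?e1 -?e2.
Qed.

Lemma exists_between (I : finType) (A B : pred I) (L U : I -> R) :
  (forall a b, A a -> B b -> L a <= U b) ->
  exists t, (forall a, A a -> L a <= t) /\ (forall b, B b -> t <= U b).
Proof.
move=> LU; case: (pickP A) => [a0 Aa0|A0].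
  have [i Ai Li_max] := @arg_maxP _ R I a0 A L Aa0.
  by exists (L i); split=> [a /Li_max|b /(LU i b Ai)].
case: (pickP B) => [b0 Bb0|B0].
  have [i Bi Ui_min] := @arg_minP _ R I b0 B U Bb0.
  by exists (U i); split=> [a|b /Ui_min]; rewrite ?A0.
by exists 0; split=> [a|b]; rewrite ?A0 ?B0.
Qed.

Section Elimination.
Variables (I : finType) (rw : I -> (nat -> R) * R) (n : nat).
Hypothesis rw_supp : forall i j, (n < j)%N -> (rw i).1 j = 0.

Let c i := (rw i).1 n.

Definition fm_elim (u : I + I * I) : (nat -> R) * R :=
  match u with
  | inl i => if c i == 0 then rw i else (fun _ => 0, 0)
  | inr (p, q) => if (0 < c p) && (c q < 0) then
      (fun j => - c q * (rw p).1 j + c p * (rw q).1 j, - c q * (rw p).2 + c p * (rw q).2)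
    else (fun _ => 0, 0)
  end.

Lemma fm_elim_supp u j : (n <= j)%N -> (fm_elim u).1 j = 0.
Proof.
rewrite leq_eqVlt => /orP[/eqP <-|nj]; case: u => [i|[p q]] /=.
- by case: ifP => // /eqP.
- by case: ifP => //= _; rewrite /c mulNr mulrC addNr.
- by case: ifP => //= _; rewrite rw_supp.
- by case: ifP => //= _; rewrite !rw_supp // !mulr0 addr0.
Qed.

Lemma fm_elim_cone u : cone rw (fm_elim u).
Proof.
case: u => [i|[p q]] /=; case: ifP => [H|_]; [exact: cone_gen | exact: cone0 i | | exact: cone0 p].
case/andP: H => cp cq.
apply: cone_ext (cone_add (cone_scale _ (cone_gen rw p)) (cone_scale _ (cone_gen rw q))) => //.
- by rewrite oppr_ge0 ltW.
- exact: ltW.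
Qed.

Lemma fm_elim_lift x : (forall u, row_holds n (fm_elim u) x) ->
  exists t, forall i, row_holds n.+1 (rw i) (fun j => if j == n then t else x j).
Proof.
move=> x_elim; pose s i := \sum_(j < n) (rw i).1 j * x j.
have lower_le_upper p q : 0 < c p -> c q < 0 ->
    ((rw p).2 - s p) / c p <= ((rw q).2 - s q) / c q.
  move=> cp cq; have := x_elim (inr (p, q)); rewrite /row_holds /= cp cq /=.
  under eq_bigr do rewrite mulrDl -!mulrA.
  rewrite big_split /= -!mulr_sumr -/(s p) -/(s q) => H.
  rewrite ler_pdivrMr // mulrAC ler_ndivlMr //; nra.
have [t [t_lower t_upper]] := exists_between lower_le_upper.
exists t => i; rewrite /row_holds big_ord_recr /= eqxx.
under eq_bigr => j _ do rewrite (ltn_eqF (ltn_ord j)).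
rewrite -/(s i) -/(c i).
case: (ltrgtP (c i) 0) => ci.
- by move: (t_upper i ci); rewrite ler_ndivlMr //; lra.
- by move: (t_lower i ci); rewrite ler_pdivrMr //; lra.
- by move: (x_elim (inl i)); rewrite /row_holds /= ci eqxx mul0r addr0.
Qed.

End Elimination.

Theorem fourier_motzkin (n : nat) (I : finType) (rw : I -> (nat -> R) * R) :
  (forall i j, (n <= j)%N -> (rw i).1 j = 0) ->
  ~ (exists x, forall i, row_holds n (rw i) x) ->
  exists2 b, 0 < b & cone rw (fun _ => 0, b).
Proof.
elim: n I rw => [|n IH] I rw rw_supp infeasible.
  have [/existsP[i bi]|/existsPn b_le0] := boolP [exists i, 0 < (rw i).2].
    by exists (rw i).2 => //; apply: cone_ext (cone_gen rw i) => // j; rewrite rw_supp.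
  case: infeasible; exists (fun _ => 0) => i.
  by rewrite /row_holds big_ord0 leNgt b_le0.
have [|b b0 cone_b] := IH _ (fm_elim rw n) (fm_elim_supp rw_supp).
  move=> [x /fm_elim_lift [t x_lift]]; apply: infeasible.
  by exists (fun j => if j == n then t else x j).
by exists b => //; apply: cone_trans cone_b; apply: fm_elim_cone.
Qed.

Corollary farkas (n : nat) (I : finType) (rw : I -> (nat -> R) * R) :
  (forall i j, (n <= j)%N -> (rw i).1 j = 0) ->
  ~ (exists x, forall i, row_holds n (rw i) x) ->
  exists mu : I -> R, [/\ forall i, 0 <= mu i,
    forall j, \sum_i mu i * (rw i).1 j = 0 & 0 < \sum_i mu i * (rw i).2].
Proof.
move=> rw_supp /(fourier_motzkin rw_supp) [b b0 /cone_coef [mu [mu_ge0 E1 E2]]].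
by exists mu; split=> // [j|]; rewrite -?E1 -?E2.
Qed.

End Farkas.

Lemma sumr_boolM (R : pzRingType) (I : finType) (P : pred I) (F : I -> R) :
  \sum_i (P i)%:R * F i = \sum_(i | P i) F i.
Proof.
by rewrite [RHS]big_mkcond; apply: eq_bigr => i _; case: (P i); rewrite ?mul1r ?mul0r.
Qed.

Lemma sum_unit (R : pzRingType) (F : unit -> R) : \sum_(u : unit) F u = F tt.
Proof. by rewrite (big_pred1 tt) // => -[]. Qed.

Lemma nonnbrsC (k : nat) (E : rel 'I_k) i j :
  symmetric E -> (j \in nonnbrs E i) = (i \in nonnbrs E j).
Proof. by move=> Esym; rewrite !inE eq_sym Esym. Qed.

Section LPDuality.
Variables (R : realType) (k : nat) (E : rel 'I_k) (lam : 'I_k -> nat).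
Hypothesis Esym : symmetric E.

Definition extnat (f : 'I_k -> R) (j : nat) : R :=
  if insub j is Some j' then f j' else 0.

Lemma extnatE f (j : 'I_k) : extnat f j = f j.
Proof. by rewrite /extnat valK. Qed.

Lemma extnat_out f j : (k <= j)%N -> extnat f j = 0.
Proof. by move=> kj; rewrite /extnat insubF // ltnNge kj. Qed.

Lemma row_holds_extnat f b x :
  row_holds k (extnat f, b) x = (b <= \sum_j f j * x j).
Proof. by rewrite /row_holds /=; under eq_bigr do rewrite extnatE. Qed.

Definition lp_rows (B : R) (u : 'I_k + 'I_k + unit) : (nat -> R) * R :=
  match u with
  | inl (inl i) => (extnat (fun j => (j == i)%:R), 0)
  | inl (inr i) => (extnat (fun j => (lam i)%:R * (j == i)%:R + (j \in nonnbrs E i)%:R), 1)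
  | inr _ => (extnat (fun j => - (lam j)%:R), - B)
  end.

Lemma lp_rows_supp B u j : (k <= j)%N -> (lp_rows B u).1 j = 0.
Proof. by case: u => [[i|i]|[]] kj /=; rewrite extnat_out. Qed.

Lemma lp_rows_feasible B x : (forall u, row_holds k (lp_rows B u) x) ->
  lp_feasible E lam (fun i => x i) /\ lp_objective lam (fun i => x i) <= B.
Proof.
move=> x_rows; split=> [i|].
- move: (x_rows (inl (inl i))) (x_rows (inl (inr i))); rewrite /= !row_holds_extnat.
  rewrite sumr_boolM big_pred1_eq => x_ge0 x_row; split=> //; move: x_row.
  rewrite (eq_bigr _ (fun j _ => mulrDl _ _ _)) big_split /=.
  under eq_bigr do rewrite -mulrA.
  by rewrite -mulr_sumr !sumr_boolM big_pred1_eq.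
- have := x_rows (inr tt); rewrite /= row_holds_extnat /lp_objective.
  by under eq_bigr do rewrite mulNr; rewrite sumrN lerN2.
Qed.

Lemma lp_rows_dual B (mu : 'I_k + 'I_k + unit -> R) (j : 'I_k) :
  \sum_u mu u * (lp_rows B u).1 j =
    mu (inl (inl j)) + ((lam j)%:R * mu (inl (inr j))
      + \sum_(i in nonnbrs E j) mu (inl (inr i))) - mu (inr tt) * (lam j)%:R.
Proof.
rewrite !big_sumType sum_unit /= extnatE mulrN; congr (_ + _ - _).
  by under eq_bigr do rewrite extnatE mulrC eq_sym; rewrite sumr_boolM big_pred1_eq.
rewrite (eq_bigr (fun i => (i == j)%:R * ((lam i)%:R * mu (inl (inr i)))
                          + (i \in nonnbrs E j)%:R * mu (inl (inr i)))) => [|i _].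
  by rewrite big_split /= !sumr_boolM big_pred1_eq.
by rewrite extnatE eq_sym (nonnbrsC _ _ Esym); ring.
Qed.

Lemma lp_certificate B :
  ~ (exists2 x, lp_feasible E lam x & lp_objective lam x <= B) ->
  exists (y : 'I_k -> R) (m : R), [/\ forall i, 0 <= y i, 0 <= m,
    forall j, (lam j)%:R * y j + \sum_(i in nonnbrs E j) y i <= m * (lam j)%:R
    & m * B < \sum_i y i].
Proof.
move=> no_x; have [|mu [mu_ge0 mu_rows mu_rhs]] := farkas (@lp_rows_supp B).
  by move=> [x /lp_rows_feasible [? ?]]; apply: no_x; exists (fun i => x i).
exists (fun i => mu (inl (inr i))), (mu (inr tt)); split=> // [j|].
  by have := mu_rows j; rewrite lp_rows_dual; have := mu_ge0 (inl (inl j)); lra.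
move: mu_rhs; rewrite !big_sumType sum_unit /= big1 => [|i _]; last exact: mulr0.
by under eq_bigr do rewrite mulr1; rewrite add0r mulrN; lra.
Qed.

Theorem zeta_le_dual B : (forall i, (0 < lam i)%N) ->
  (forall y : 'I_k -> R, (forall i, 0 <= y i) ->
     (forall j, (lam j)%:R * y j + \sum_(i in nonnbrs E j) y i <= (lam j)%:R) ->
     \sum_i y i <= B) ->
  @zeta R k E lam <= B.
Proof.
move=> lam_gt0 dual_le.
have [x x_feas x_obj] : exists2 x, lp_feasible E lam x & lp_objective lam x <= B.
  apply: contrapT => /lp_certificate [y [m [y_ge0 m_ge0 y_dual yB]]].
  have [m0|m_gt0] := eqVneq m 0.
    suff y0 j : y j = 0 by move: yB; rewrite m0 mul0r big1 // ltxx.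
    have := y_dual j; rewrite m0 mul0r; have := y_ge0 j.
    have : 0 < (lam j)%:R :> R by rewrite ltr0n.
    have : 0 <= \sum_(i in nonnbrs E j) y i by apply: sumr_ge0.
    nra.
  have {}m_gt0 : 0 < m by rewrite lt_def m_gt0.
  have : \sum_i y i / m <= B.
    apply: dual_le => [i|j]; first by rewrite divr_ge0.
    by rewrite -mulr_suml mulrA -mulrDl ler_pdivrMr // [_ * m]mulrC.
  by rewrite -mulr_suml ler_pdivrMr // mulrC leNgt yB.
apply: le_trans x_obj; apply: ge_inf; last by exists x.
exists 0 => _ [x' x'_feas <-]; apply: sumr_ge0 => i _.
by apply: mulr_ge0 => //; case: (x'_feas i).
Qed.

End LPDuality.

Definition clique (k : nat) (E : rel 'I_k) (C : {set 'I_k}) :=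
  {in C &, forall i j, i != j -> E i j}.

Lemma clique_setU1 (k : nat) (E : rel 'I_k) (c : 'I_k) (C : {set 'I_k}) :
  symmetric E -> clique E C -> {in C, forall j, E c j} -> clique E (c |: C).
Proof.
move=> Esym Cc cC i j; rewrite !inE => /orP[/eqP->|iC] /orP[/eqP->|jC].
- by rewrite eqxx.
- by move=> _; apply: cC.
- by move=> _; rewrite Esym; apply: cC.
- exact: Cc.
Qed.

(* The two estimates [l * y + s <= l] and [s <= n * y] give
   [(l + n) * (y + s) <= (1 + n) * l], and [(5 l + 1 + n) (l + n) - 8 (1 + n) l
   = (n - l)^2 + l (4 l - 7) + n] is nonnegative for [l >= 2]. *)
Lemma vertex_star_bound (R : realFieldType) (l y s n : R) :
  2 <= l -> 0 <= y -> 0 <= n -> l * y + s <= l -> s <= n * y ->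
  8 * (y + s) <= 5 * l + 1 + n.
Proof.
move=> l_ge2 y_ge0 n_ge0 hl hn.
have h1 : 0 <= (l - 1) * (n * y - s) by apply: mulr_ge0; lra.
have h2 : 0 <= (1 + n) * (l - l * y - s) by apply: mulr_ge0; lra.
have h3 : 0 <= (n - l) ^+ 2 by apply: sqr_ge0.
rewrite -(ler_pM2r (_ : 0 < l + n)); last by lra.
nra.
Qed.

Section DualBound.
Variables (R : realFieldType) (k : nat) (E : rel 'I_k) (lam : 'I_k -> nat).
Variable y : 'I_k -> R.
Hypothesis Esym : symmetric E.
Hypothesis lam_ge2 : forall i, (2 <= lam i)%N.
Hypothesis y_ge0 : forall i, 0 <= y i.
Hypothesis y_dual :
  forall j, (lam j)%:R * y j + \sum_(i in nonnbrs E j) y i <= (lam j)%:R.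

Lemma sum_split_nonnbrs (F : 'I_k -> R) (S : {set 'I_k}) c : c \in S ->
  \sum_(i in S) F i = F c + \sum_(i in (S :\ c) :&: nonnbrs E c) F i
                          + \sum_(i in (S :\ c) :\: nonnbrs E c) F i.
Proof.
move=> cS; rewrite (big_setD1 c cS) [\sum_(i in S :\ c) _](big_setID (nonnbrs E c)).
exact: addrA.
Qed.

Lemma max_vertex_bound (S : {set 'I_k}) c : c \in S -> {in S, forall i, y i <= y c} ->
  8 * (y c + \sum_(i in (S :\ c) :&: nonnbrs E c) y i)
    <= 5 * (lam c)%:R + 1 + #|(S :\ c) :&: nonnbrs E c|%:R.
Proof.
move=> cS c_max; set M := (S :\ c) :&: nonnbrs E c.
apply: vertex_star_bound => //; first by rewrite (ler_nat R 2).
  apply: le_trans (y_dual c); rewrite lerD2l.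
  rewrite [X in _ <= X](big_setID M) (setIidPr (subsetIr _ _)) lerDl.
  exact: sumr_ge0.
rewrite mulr_natl -sumr_const; apply: ler_sum => i; move=> /setIP[/setD1P[_ iS] _].
exact: c_max.
Qed.

Lemma clique_nbrs_weight (S : {set 'I_k}) c (D : R) : c \in S ->
  (forall C : {set 'I_k}, C \subset S -> (1 < #|C|)%N -> clique E C ->
     \sum_(i in C) ((lam i)%:R + 1) <= D) ->
  forall C : {set 'I_k}, C \subset (S :\ c) :\: nonnbrs E c -> (0 < #|C|)%N -> clique E C ->
    \sum_(i in C) ((lam i)%:R + 1) <= D - ((lam c)%:R + 1).
Proof.
move=> cS cliqueD C CN C0 Ccl.
have cC : c \notin C by apply/negP => /(subsetP CN) /setDP[/setD1P[]]; rewrite eqxx.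
have cadj : {in C, forall j, E c j}.
  by move=> j /(subsetP CN) /setDP[/setD1P[jc _]]; rewrite /nonnbrs inE jc negbK.
rewrite lerBrDl -big_setU1 //=; apply: cliqueD.
- by apply/subsetP => i /setU1P[->|/(subsetP CN) /setDP[/setD1P[_ iS] _]].
- by rewrite cardsU1 cC add1n ltnS.
- exact: clique_setU1.
Qed.

Lemma dual_sum_le (S : {set 'I_k}) (D : R) : 0 <= D ->
  (forall C : {set 'I_k}, C \subset S -> (1 < #|C|)%N -> clique E C ->
     \sum_(i in C) ((lam i)%:R + 1) <= D) ->
  {in S, forall i, (lam i)%:R <= D} ->
  8 * \sum_(i in S) y i <= 5 * D + #|S|%:R.
Proof.
have [n] := ubnP #|S|; elim: n S D => // n IH S D ltSn D_ge0 cliqueD lamD.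
have [->|[i0 i0S]] := set_0Vmem S; first by rewrite big_set0 cards0; lra.
have [c cS c_max] := @arg_maxP _ R _ i0 (fun i => i \in S) y i0S.
set M := (S :\ c) :&: nonnbrs E c; set N := (S :\ c) :\: nonnbrs E c.
have star := max_vertex_bound cS c_max; rewrite -/M in star.
have cardS : #|S|%:R = 1 + #|M|%:R + #|N|%:R :> R.
  by rewrite -!sumr_const (sum_split_nonnbrs _ cS).
rewrite (sum_split_nonnbrs _ cS) -/M -/N cardS.
have [N0|[j jN]] := set_0Vmem N.
  by move: (lamD c cS); rewrite N0 big_set0 cards0; lra.
have N_weight := clique_nbrs_weight cS cliqueD.
have lamN : {in N, forall j, (lam j)%:R <= D - ((lam c)%:R + 1)}.
  move=> j' j'N; apply: le_trans (N_weight [set j'] _ _ _); rewrite ?big_set1 ?lerDl //.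
  - by rewrite sub1set.
  - by rewrite cards1.
  - by move=> a b; rewrite !inE => /eqP-> /eqP->; rewrite eqxx.
have ltNn : (#|N| < n)%N.
  rewrite (leq_ltn_trans (subset_leq_card (subsetDl _ _))) //.
  by move: ltSn; rewrite (cardsD1 c S) cS add1n ltnS.
have recN : 8 * \sum_(i in N) y i <= 5 * (D - ((lam c)%:R + 1)) + #|N|%:R.
  apply: (IH _ _ ltNn _ _ lamN) => [|C CN C1 Ccl].
  - by have := lamN j jN; have := ler0n R (lam j); lra.
  - by apply: N_weight => //; apply: ltnW.
lra.
Qed.

End DualBound.

Section Geometry.
Variables (R : realType) (d : nat).
Implicit Types (u v w p q : 'rV[R]_d).

Definition dotv u v : R := (u *m v^T) 0 0.

Lemma dotvE u v : dotv u v = \sum_j u 0 j * v 0 j.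
Proof. by rewrite /dotv mxE; apply: eq_bigr => j _; rewrite mxE. Qed.

Lemma dotvC u v : dotv u v = dotv v u.
Proof. by rewrite !dotvE; apply: eq_bigr => j _; rewrite mulrC. Qed.

Lemma dotvDl u v w : dotv (u + v) w = dotv u w + dotv v w.
Proof. by rewrite /dotv mulmxDl mxE. Qed.

Lemma dotvDr u v w : dotv w (u + v) = dotv w u + dotv w v.
Proof. by rewrite dotvC dotvDl !(dotvC w). Qed.

Lemma dotvNl u v : dotv (- u) v = - dotv u v.
Proof. by rewrite /dotv mulNmx mxE. Qed.

Lemma dotvNr u v : dotv u (- v) = - dotv u v.
Proof. by rewrite dotvC dotvNl dotvC. Qed.

Lemma dotv_sqrD u v : dotv (u + v) (u + v) = dotv u u + 2 * dotv u v + dotv v v.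
Proof. by rewrite dotvDl !dotvDr (dotvC v u); ring. Qed.

Lemma dotv_sumr (I : finType) (P : pred I) u (v : I -> 'rV[R]_d) :
  dotv u (\sum_(j | P j) v j) = \sum_(j | P j) dotv u (v j).
Proof.
apply: (big_rec2 (fun a b => dotv u b = a)) => [|j a b _ <-]; last exact: dotvDr.
by rewrite /dotv trmx0 mulmx0 mxE.
Qed.

Lemma dotv_ge0 u : 0 <= dotv u u.
Proof. by rewrite dotvE sumr_ge0 // => j _; rewrite -expr2 sqr_ge0. Qed.

Lemma dotv_eq0 u : dotv u u = 0 -> u = 0.
Proof.
rewrite dotvE => u0; apply/rowP => j; rewrite mxE.
have sq_ge0 i : true -> 0 <= u 0 i * u 0 i by rewrite -expr2 sqr_ge0.
by move: (psumr_eq0P sq_ge0 u0 (i := j) isT) => /eqP; rewrite mulf_eq0 orbb => /eqP.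
Qed.

Lemma eucl_normE u : eucl_norm u = Num.sqrt (dotv u u).
Proof. by rewrite /eucl_norm dotvE; under eq_bigr do rewrite expr2. Qed.

Lemma eucl_norm_sqr u : eucl_norm u ^+ 2 = dotv u u.
Proof. by rewrite eucl_normE sqr_sqrtr ?dotv_ge0. Qed.

(* Expand the four squared unit distances; the squared norms cancel. *)
Lemma dotv_unit_dist p q p' q' :
  eucl_norm (p - p') = 1 -> eucl_norm (p - q') = 1 ->
  eucl_norm (q - p') = 1 -> eucl_norm (q - q') = 1 ->
  dotv (p - q) (p' - q') = 0.
Proof.
move=> pp' pq' qp' qq'.
have := congr1 (fun x => x ^+ 2) pp'; have := congr1 (fun x => x ^+ 2) pq'.
have := congr1 (fun x => x ^+ 2) qp'; have := congr1 (fun x => x ^+ 2) qq'.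
rewrite /= !eucl_norm_sqr !(dotvDl, dotvDr, dotvNl, dotvNr).
rewrite (dotvC p' p) (dotvC q' p) (dotvC p' q) (dotvC q' q); lra.
Qed.

Lemma dotv_orthmx m n (A : 'M[R]_(m, d)) (B : 'M[R]_(n, d)) u v :
  A *m B^T = 0 -> (u <= A)%MS -> (v <= B)%MS -> dotv u v = 0.
Proof.
move=> AB /submxP[a ->] /submxP[b ->].
by rewrite /dotv trmx_mul mulmxA -(mulmxA a) AB mulmx0 mul0mx mxE.
Qed.

Lemma gram_unitmx m (B : 'M[R]_(m, d)) : row_free B -> B *m B^T \in unitmx.
Proof.
move=> Bfree; rewrite -row_free_unit; apply/inj_row_free => v vBB.
apply: (row_free_inj Bfree); rewrite mul0mx; apply: dotv_eq0.
by rewrite /dotv trmx_mul mulmxA -(mulmxA v) vBB mul0mx mxE.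
Qed.

Lemma rowspace_proj m (B : 'M[R]_(m, d)) w : row_free B ->
  exists2 pr, (pr <= B)%MS & (pr - w) *m B^T = 0.
Proof.
move=> Bfree; exists (w *m B^T *m invmx (B *m B^T) *m B); first exact: submxMl.
by rewrite mulmxBl -!mulmxA mulVmx ?gram_unitmx // mulmx1 subrr.
Qed.

(* The centre is the foot of the perpendicular from [p'] to the affine span
   [b + <<B>>]; by Pythagoras every point of [A] is at the same distance from it. *)
Lemma in_sphere_dim_span m (B : 'M[R]_(m.+1, d)) (A : {fset 'rV[R]_d}) b p' :
  row_free B -> b \in A -> {in A, forall p, (p - b <= B)%MS} ->
  {in A, forall p, eucl_norm (p - p') = 1} -> (exists2 q, q \in A & q != b) ->
  in_sphere_dim m A.
Proof.
move=> Bfree bA AB Ap' [q qA qb].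
have [pr prB pr_orth] := rowspace_proj (p' - b) Bfree.
pose c := b + pr.
have AcB p : p \in A -> (p - c <= B)%MS.
  by move=> pA; rewrite opprD addrA addmx_sub ?AB // eqmx_opp.
have pyth p : p \in A -> dotv (p - c) (p - c) = 1 - dotv (c - p') (c - p').
  move=> pA; have c_orth : dotv (p - c) (c - p') = 0.
    apply: (dotv_orthmx _ (AcB p pA) (submx_refl (c - p'))).
    have -> : c - p' = pr - (p' - b) by rewrite /c opprB addrA [b + pr]addrC -addrA addrA.
    by rewrite -[B]trmxK -trmx_mul pr_orth trmx0.
  have := eucl_norm_sqr (p - p'); rewrite Ap' // expr1n.
  have -> : p - p' = (p - c) + (c - p') by rewrite addrA subrK.
  by rewrite dotv_sqrD c_orth; lra.
exists c, B, (eucl_norm (b - c)); split => //; first exact/eqP.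
  rewrite lt_def eucl_normE sqrtr_ge0 andbT sqrtr_eq0 -ltNge lt_def dotv_ge0 andbT.
  apply: contra qb => /eqP/dotv_eq0/eqP; rewrite subr_eq0 => /eqP bc.
  have /dotv_eq0/eqP : dotv (q - c) (q - c) = 0.
    by rewrite pyth // -(pyth b) // bc subrr /dotv mul0mx mxE.
  by rewrite subr_eq0 bc.
move=> p pA; split; first exact: AcB.
by rewrite !eucl_normE pyth // -(pyth b).
Qed.

Definition diffmx (A : {fset 'rV[R]_d}) b : 'M[R]_(#|` A|, d) :=
  \matrix_(t < #|` A|) (nth 0 (enum_fset A) t - b).

Lemma diffmx_sub (A : {fset 'rV[R]_d}) b p : p \in A -> (p - b <= diffmx A b)%MS.
Proof.
move=> pA; have pAi : (index p (enum_fset A) < #|` A|)%N by rewrite index_mem.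
by apply: (eq_row_sub (Ordinal pAi)); rewrite rowK nth_index.
Qed.

Lemma diffmx_row (A : {fset 'rV[R]_d}) b t :
  exists2 p, p \in A & row t (diffmx A b) = p - b.
Proof. by exists (nth 0 (enum_fset A) t); [apply: mem_nth | rewrite rowK]. Qed.

Lemma diffmx_orth (A A' : {fset 'rV[R]_d}) a a' :
  {in A & A', forall p q, eucl_norm (p - q) = 1} -> a \in A -> a' \in A' ->
  diffmx A a *m (diffmx A' a')^T = 0.
Proof.
move=> AA' aA a'A'; apply/matrixP => t t'; rewrite [RHS]mxE.
have -> : (diffmx A a *m (diffmx A' a')^T) t t' =
          dotv (row t (diffmx A a)) (row t' (diffmx A' a')).
  by rewrite dotvE mxE; apply: eq_bigr => j _; rewrite !mxE.
have [p pA ->] := diffmx_row a t; have [q qA' ->] := diffmx_row a' t'.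
by apply: dotv_unit_dist; apply: AA'.
Qed.

Lemma fset_two_points (A : {fset 'rV[R]_d}) : (1 < #|` A|)%N ->
  exists b, b \in A /\ exists2 q, q \in A & q != b.
Proof.
move=> A2; exists (nth 0 (enum_fset A) 0); split; first by rewrite mem_nth // ltnW.
by exists (nth 0 (enum_fset A) 1); rewrite ?mem_nth // nth_uniq ?fset_uniq // ltnW.
Qed.

Lemma profile_lt_rank (A : {fset 'rV[R]_d}) b q p' (lam : nat) :
  b \in A -> q \in A -> q != b -> {in A, forall p, eucl_norm (p - p') = 1} ->
  (forall l, (l < lam)%N -> ~ in_sphere_dim l A) ->
  (lam < \rank (diffmx A b))%N.
Proof.
move=> bA qA qb Ap' lam_min.
suff key m (B : 'M[R]_(m, d)) : row_free B -> {in A, forall p, (p - b <= B)%MS} ->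
    (lam < m)%N.
  by apply: key (row_base_free _) _ => p pA; rewrite eq_row_base diffmx_sub.
case: m B => [|m] B Bfree Ab.
  by move: (Ab q qA); rewrite (flatmx0 B) => /submx0null/eqP; rewrite subr_eq0 (negbTE qb).
rewrite ltnS leqNgt; apply/negP => /lam_min; apply.
by apply: (in_sphere_dim_span Bfree bA Ab Ap'); exists q.
Qed.

Lemma sum_rank_orthogonal (I : finType) (C : {set I}) (Ms : I -> 'M[R]_d) :
  {in C &, forall i j, i != j -> forall u v, (u <= Ms i)%MS -> (v <= Ms j)%MS ->
     dotv u v = 0} ->
  (\sum_(i in C) \rank (Ms i) <= d)%N.
Proof.
move=> Ms_orth; suff : mxdirect (\sum_(i in C) Ms i).
  by rewrite mxdirectE /= => /eqP <-; apply: rank_leq_col.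
apply/mxdirect_sumsP => i iC; apply/row_matrixP => r; rewrite row0.
set Z := (Ms i :&: _)%MS; have rZ : (row r Z <= Z)%MS := row_sub r Z.
have /sub_sumsmxP[w rZw] := submx_trans rZ (capmxSr _ _).
apply: dotv_eq0; rewrite {2}rZw dotv_sumr big1 // => j /andP[jC ji].
apply: (Ms_orth i j iC jC); rewrite 1?eq_sym //; last exact: submxMl.
exact: submx_trans rZ (capmxSl _ _).
Qed.

Lemma profile_value_pos (A : {fset 'rV[R]_d}) lam : profile_value A lam -> (0 < lam)%N ->
  [/\ (3 < #|` A|)%N, (lam <= d)%N & forall l, (l < lam)%N -> ~ in_sphere_dim l A].
Proof. by rewrite /profile_value; case: (leqP #|` A| 3) => [_ ->|A3 [lam_d _ lam_min] _]. Qed.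

Lemma clique_profile_le_dim (k : nat) (E : rel 'I_k) (lam : 'I_k -> nat)
    (P : 'I_k -> {fset 'rV[R]_d}) (C : {set 'I_k}) :
  has_profile P lam -> compatible E P -> (forall i, 0 < lam i)%N ->
  (1 < #|C|)%N -> clique E C -> (\sum_(i in C) (lam i).+1 <= d)%N.
Proof.
move=> Pprof Pcomp lam_gt0 C2 Ccl.
have Pinfo i := profile_value_pos (Pprof i) (lam_gt0 i).
have /fin_all_exists[b bP] i : exists b, b \in P i /\ exists2 q, q \in P i & q != b.
  by apply: fset_two_points; case: (Pinfo i) => P3 _ _; apply: leq_trans P3.
apply: leq_trans (sum_rank_orthogonal (Ms := fun i => <<diffmx (P i) (b i)>>%MS) _).
  apply: leq_sum => i iC; rewrite genmxE.
  have /card_gt0P[j] : (0 < #|C :\ i|)%N by move: C2; rewrite (cardsD1 i C) iC.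
  rewrite !inE => /andP[ji jC]; have [q qP qb] := (bP i).2.
  case: (Pinfo i) => _ _ lam_min; apply: (profile_lt_rank (bP i).1 qP qb _ lam_min).
  by move=> p pP; apply: (Pcomp i j (Ccl i j iC jC _)) pP (bP j).1; rewrite eq_sym.
move=> i j iC jC ij u v; rewrite !genmxE; apply: dotv_orthmx.
apply: diffmx_orth; [| exact: (bP i).1 | exact: (bP j).1].
by move=> p q pP qP; apply: Pcomp (Ccl i j iC jC ij) p q pP qP.
Qed.

End Geometry.

Theorem theorem5p5 (R : realType) (d k : nat) (E : rel 'I_k) (lam : 'I_k -> nat) :
  symmetric E -> irreflexive E ->
  @realisable R d k E lam ->
  (forall i, (2 <= lam i)%N) ->
  @zeta R k E lam <= (5 / 8) * d%:R + (1 / 8) * k%:R :> R.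
Proof.
move=> Esym _ [P [Pprof Pcomp]] lam_ge2.
have lam_gt0 i : (0 < lam i)%N by apply: ltn_trans (lam_ge2 i).
apply: zeta_le_dual => // y y_ge0 y_dual.
have : 8 * \sum_(i in [set: 'I_k]) y i <= 5 * d%:R + #|[set: 'I_k]|%:R.
  apply: dual_sum_le => // [C _ C2 Ccl|i _].
    have := clique_profile_le_dim Pprof Pcomp lam_gt0 C2 Ccl.
    by rewrite -(ler_nat R) natr_sum; under eq_bigr do rewrite -natr1.
  by have [_ ? _] := profile_value_pos (Pprof i) (lam_gt0 i); rewrite ler_nat.
under eq_bigl do rewrite in_setT; rewrite cardsT card_ord; lra.
Qed.
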